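(* Let $\mathcal{S}$ be a periodic symbol sequence of period $n$. Suppose $I-M_{\mathcal{S}^{\overline0}}$ is nonsingular, $I-M_{\mathcal{S}}$ and $P_{\mathcal{S}}$ are singular, $\mu\ne0$, and $\varrho^{\mathsf T}B\ne0$. Then $P_{\mathcal{S}^{(i)}}$ is singular for all $i$.
   Context: $A_L,A_R$ are real $N\times N$ matrices ($N\ge2$) with $A_R=A_L+Ce_1^{\mathsf T}$ for some $C\in\mathbb{R}^N$; $B\in\mathbb{R}^N$, $\mu\in\mathbb{R}$; $\varrho^{\mathsf T}=e_1^{\mathsf T}\mathrm{adj}(I-A_L)$. A periodic sequence $\mathcal{S}:\mathbb{Z}\to\{L,R\}$ of period $n$ is identified with $\mathcal{S}_0\cdots\mathcal{S}_{n-1}$; $\mathcal{S}^{(i)}_j=\mathcal{S}_{i+j}$; $\mathcal{S}^{\overline0}$ differs from $\mathcal{S}$ exactly at indices $\equiv0\pmod n$. $M_{\mathcal{S}}=A_{\mathcal{S}_{n-1}}\cdots A_{\mathcal{S}_0}$ and $P_{\mathcal{S}}=I+A_{\mathcal{S}_{n-1}}+A_{\mathcal{S}_{n-1}}A_{\mathcal{S}_{n-2}}+\cdots+A_{\mathcal{S}_{n-1}}\cdots A_{\mathcal{S}_1}$. *)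

From HB Require Import structures.
From mathcomp Require Import all_boot all_order all_algebra.
From mathcomp Require Export reals.
Set Implicit Arguments. Unset Strict Implicit. Unset Printing Implicit Defensive.
Import Order.TTheory GRing.Theory Num.Theory.
Local Open Scope ring_scope.

Inductive sym := symL | symR.

Definition symseq := int -> sym.

Definition periodic (S : symseq) (n : nat) : Prop := forall j : int, S (j + n%:Z)%R = S j.

Definition shiftseq (S : symseq) (i : int) : symseq := fun j => S (i + j)%R.

Definition flip (s : sym) : sym := match s with symL => symR | symR => symL end.

Definition flip0 (S : symseq) (n : nat) : symseq :=
  fun j => if (j %% n%:Z)%Z == 0 then flip (S j) else S j.

Section Mats.
Variables (R : realType) (N : nat) (AL AR : 'M[R]_N).

Definition Amat (s : sym) : 'M[R]_N := if s is symR then AR else AL.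

Fixpoint Mprod (S : symseq) (k : nat) : 'M[R]_N :=
  match k with
  | 0 => 1%:M
  | k'.+1 => Amat (S k'%:Z) *m Mprod S k'
  end.

Definition MS (S : symseq) (n : nat) : 'M[R]_N := Mprod S n.

Fixpoint tailprod (S : symseq) (n k : nat) : 'M[R]_N :=
  match k with
  | 0 => 1%:M
  | k'.+1 => tailprod S n k' *m Amat (S (n - k'.+1)%N%:Z)
  end.

(* P_S = I + A_{S_{n-1}} + A_{S_{n-1}}A_{S_{n-2}} + ... + A_{S_{n-1}}...A_{S_1} *)
Definition PS (S : symseq) (n : nat) : 'M[R]_N := \sum_(k < n) tailprod S n k.
End Mats.

Definition e1 (R : realType) (N : nat) : 'cV[R]_N := \col_i ((val i == 0%N)%:R).

(* The identity [1 - M_S = P_S (1 - A_L) - g e_1^T], obtained by telescoping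
   [1 - M_S] along the partial products of [P_S], shows that a nonzero left
   null vector [y] of [P_S] satisfies [y (1 - M_S) = -(y g) e_1^T].  Since
   [1 - M_S^{bar 0}] differs from [1 - M_S] by a matrix of the form
   [c e_1^T], any right null vector [u] of [1 - M_S] has [e_1^T u <> 0];
   hence [y g = 0] and [y] is a common left null vector of [1 - M_S] and
   [P_S].  Such a common null vector [w] of [S] yields the common null vector
   [w A_{S_{n-1}} ... A_{S_1}] of the shift [S^(1)], so by induction and
   periodicity every [P_{S^(i)}] is singular. *)

From HB Require Import structures.
From mathcomp Require Import all_boot all_order all_algebra.
From mathcomp Require Import reals zify.
From Stdlib Require Import FunctionalExtensionality.
Set Implicit Arguments.
Unset Strict Implicit.
Unset Printing Implicit Defensive.
Import Order.TTheory GRing.Theory Num.Theory.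
Local Open Scope ring_scope.

Lemma shiftseq0 (S : symseq) : shiftseq S 0 = S.
Proof. by apply: functional_extensionality => j; rewrite /shiftseq add0r. Qed.

Lemma shiftseqD (S : symseq) (i k : int) :
  shiftseq (shiftseq S i) k = shiftseq S (i + k).
Proof. by apply: functional_extensionality => j; rewrite /shiftseq addrA. Qed.

Lemma periodic_shiftseq (S : symseq) n i : periodic S n -> periodic (shiftseq S i) n.
Proof. by move=> hper j; rewrite /shiftseq addrA hper. Qed.

Lemma periodic_mulz (S : symseq) n : periodic S n ->
  forall (z j : int), S (j + z * n%:Z) = S j.
Proof.
move=> hper.
have hnat m j : S (j + (m%:Z * n%:Z)) = S j.
  elim: m j => [|m IH] j; first by rewrite mul0r addr0.
  by rewrite -[m.+1]addn1 PoszD mulrDl mul1r addrA hper IH.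
case=> [m|m] j; first exact: hnat.
rewrite -(hnat m.+1 (j + Negz m * n%:Z)) NegzE -addrA mulNr.
by rewrite addNr addr0.
Qed.

Lemma shiftseq_modz (S : symseq) n i : periodic S n ->
  shiftseq S i = shiftseq S (i %% n%:Z)%Z.
Proof.
move=> hper; apply: functional_extensionality => j; rewrite /shiftseq.
by rewrite {1}(divz_eq i n%:Z) -addrA addrC periodic_mulz.
Qed.

Lemma mx11_mul_eq0l (R : idomainType) (a b : 'M[R]_1) :
  a *m b = 0 -> b != 0 -> a = 0.
Proof.
move=> /(congr1 determinant); rewrite det_mulmx det0 !det_mx11 => /eqP.
rewrite mulf_eq0 => /orP[/eqP a0 | /eqP b0] bn0.
  by apply/matrixP=> i j; rewrite !ord1 a0 mxE.
by move: bn0; rewrite (mx11_scalar b) b0 raddf0 eqxx.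
Qed.

Section Products.
Variables (R : realType) (N : nat) (AL AR : 'M[R]_N).

Local Notation A := (Amat AL AR).
Local Notation tailprod := (tailprod AL AR).

Lemma tailprodS S n k : tailprod S n k.+1 = tailprod S n k *m A (S (n - k.+1)%N%:Z).
Proof. by []. Qed.

Lemma tailprod_Mprod S n k : (k <= n)%N ->
  tailprod S n k *m Mprod AL AR S (n - k) = Mprod AL AR S n.
Proof.
elim: k => [|k IH] hk; first by rewrite subn0 mul1mx.
have nk : (n - k = (n - k.+1).+1)%N by lia.
by rewrite -IH ?(ltnW hk) // nk /= mulmxA.
Qed.

Lemma MS_tailprod S n : MS AL AR S n = tailprod S n n.
Proof. by rewrite /MS -(tailprod_Mprod S (leqnn n)) subnn mulmx1. Qed.

Lemma tailprod_shiftseq1 S n k : (k < n)%N ->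
  tailprod (shiftseq S 1) n k.+1 = A (S n) *m tailprod S n k.
Proof.
elim: k => [|k IH] hk.
  by rewrite /= mul1mx mulmx1 /shiftseq; congr (A (S _)); lia.
rewrite tailprodS IH ?(ltnW hk) // tailprodS -mulmxA /shiftseq.
by congr (_ *m (_ *m A (S _))); lia.
Qed.

Lemma tailprod_flip0 S n k : (k < n)%N -> tailprod (flip0 S n) n k = tailprod S n k.
Proof.
elim: k => [|k IH] hk //=.
rewrite IH ?(ltnW hk) // /flip0 modz_nat modn_small; last by lia.
by have -> : ((n - k.+1)%N == 0%N :> int) = false by apply/eqP; lia.
Qed.

Lemma subr1_tailprod S n k : 1%:M - tailprod S n k =
  \sum_(j < k) tailprod S n j *m (1%:M - A (S (n - j.+1)%N%:Z)).
Proof.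
elim: k => [|k IH]; first by rewrite big_ord0 subrr.
by rewrite big_ord_recr /= -IH mulmxBr mulmx1 addrA subrK.
Qed.

Lemma MS_flip0 S n (D : sym -> 'cV[R]_N) : (0 < n)%N ->
  (forall x, A (flip x) = A x + D x *m (e1 R N)^T) ->
  MS AL AR (flip0 S n) n = MS AL AR S n + tailprod S n n.-1 *m D (S 0) *m (e1 R N)^T.
Proof.
case: n => [//|n] _ hA.
rewrite !MS_tailprod !tailprodS subnn tailprod_flip0 //= /flip0 mod0z eqxx hA.
by rewrite mulmxDr mulmxA.
Qed.

Definition common_left_null (S : symseq) (n : nat) (w : 'rV[R]_N) : Prop :=
  w *m (1%:M - MS AL AR S n) = 0 /\ w *m PS AL AR S n = 0.

(* [w] is fixed by [M_S = T A_{S_0}], so [w T] is fixed by [M_{S^(1)} = A_{S_0} T]. *)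
Lemma common_left_null_shiftseq1 S n w : (0 < n)%N -> periodic S n ->
  w != 0 -> common_left_null S n w ->
  exists2 w' : 'rV[R]_N, w' != 0 & common_left_null (shiftseq S 1) n w'.
Proof.
case: n => [//|n] _ hper wn0 [hM hP].
set T := tailprod S n.+1 n; set A0 := A (S 0).
have hSn : S n.+1 = S 0 by rewrite -(hper 0) add0r.
have eM : MS AL AR S n.+1 = T *m A0 by rewrite MS_tailprod tailprodS subnn.
have eM' : MS AL AR (shiftseq S 1) n.+1 = A0 *m T.
  by rewrite MS_tailprod tailprod_shiftseq1 // hSn.
have eP : PS AL AR S n.+1 = \sum_(k < n) tailprod S n.+1 k + T.
  by rewrite /PS big_ord_recr.
have eP' : PS AL AR (shiftseq S 1) n.+1 = 1%:M + A0 *m \sum_(k < n) tailprod S n.+1 k.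
  rewrite /PS big_ord_recl mulmx_sumr; congr (_ + _); apply: eq_bigr => k _.
  by rewrite [lift _ _ : nat]/= tailprod_shiftseq1 ?hSn // ltnS ltnW.
have hw : w = w *m T *m A0.
  by move/eqP: hM; rewrite eM mulmxBr mulmx1 -mulmxA subr_eq0 => /eqP.
exists (w *m T); first by apply: contra wn0 => /eqP h; rewrite hw h mul0mx.
split; first by rewrite eM' mulmxBr mulmx1 !mulmxA -hw subrr.
by rewrite eP' mulmxDr mulmx1 mulmxA -hw; move: hP; rewrite eP mulmxDr addrC.
Qed.

Lemma common_left_null_shiftseq S n w : (0 < n)%N -> periodic S n ->
  w != 0 -> common_left_null S n w ->
  forall k : nat, exists2 w' : 'rV[R]_N, w' != 0 & common_left_null (shiftseq S k) n w'.
Proof.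
move=> hn hper wn0 hw; elim=> [|k [w' w'n0 hw']]; first by exists w; rewrite ?shiftseq0.
rewrite -[k.+1]addn1 PoszD -shiftseqD.
exact: common_left_null_shiftseq1 hn (periodic_shiftseq k hper) w'n0 hw'.
Qed.

Section Border.
Variable C : 'cV[R]_N.
Hypothesis hAR : AR = AL + C *m (e1 R N)^T.

Lemma Amat_flip x :
  A (flip x) = A x + (if x is symR then - C else C) *m (e1 R N)^T.
Proof. by case: x; rewrite /= hAR // mulNmx addrK. Qed.

Lemma subr1_MS_PS S n : exists g : 'cV[R]_N,
  1%:M - MS AL AR S n = PS AL AR S n *m (1%:M - AL) - g *m (e1 R N)^T.
Proof.
pose D (x : sym) : 'cV[R]_N := if x is symR then C else 0.
have hA x : 1%:M - A x = (1%:M - AL) - D x *m (e1 R N)^T.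
  by case: x; rewrite /= ?mul0mx ?subr0 // hAR opprD addrA.
exists (\sum_(j < n) tailprod S n j *m D (S (n - j.+1)%N%:Z)).
rewrite MS_tailprod subr1_tailprod /PS.
under eq_bigr => j _ do rewrite hA mulmxBr.
rewrite sumrB !mulmx_suml; congr (_ - _).
by apply: eq_bigr => j _; rewrite mulmxA.
Qed.

Lemma e1_right_null_MS S n (u : 'cV[R]_N) : (0 < n)%N ->
  \det (1%:M - MS AL AR (flip0 S n) n) != 0 ->
  u != 0 -> (1%:M - MS AL AR S n) *m u = 0 -> (e1 R N)^T *m u != 0.
Proof.
move=> hn hS0 un0 hu; apply: contra hS0 => /eqP eu.
rewrite -det_tr; apply/det0P; exists u^T; first by rewrite trmx_eq0.
rewrite -trmx_mul (MS_flip0 S hn Amat_flip) opprD addrA mulmxBl hu sub0r.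
by rewrite -(mulmxA _ (e1 R N)^T) eu mulmx0 oppr0 trmx0.
Qed.

Lemma left_null_PS_MS S n (y : 'rV[R]_N) : (0 < n)%N ->
  \det (1%:M - MS AL AR (flip0 S n) n) != 0 -> \det (1%:M - MS AL AR S n) = 0 ->
  y *m PS AL AR S n = 0 -> common_left_null S n y.
Proof.
move=> hn hS0 hMS hy; split=> //.
have [g hg] := subr1_MS_PS S n.
have hy1 : y *m (1%:M - MS AL AR S n) = - ((y *m g) *m (e1 R N)^T).
  by rewrite hg mulmxBr mulmxA hy mul0mx sub0r mulmxA.
have /det0P [v vn0 hv] : \det (1%:M - MS AL AR S n)^T == 0 by rewrite det_tr hMS.
have hu : (1%:M - MS AL AR S n) *m v^T = 0 by rewrite -[_ *m _]trmxK trmx_mul trmxK hv trmx0.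
have eu : (e1 R N)^T *m v^T != 0 by apply: e1_right_null_MS hn hS0 _ hu; rewrite trmx_eq0.
suff hyg : y *m g = 0 by rewrite hy1 hyg mul0mx oppr0.
apply: mx11_mul_eq0l eu; apply: oppr_inj.
by rewrite oppr0 mulmxA -mulNmx -hy1 -mulmxA hu mulmx0.
Qed.

End Border.
End Products.

Theorem lemma4p10 (R : realType) (N : nat) (hN : (2 <= N)%N)
  (AL AR : 'M[R]_N) (C B : 'cV[R]_N) (mu : R)
  (hAR : AR = AL + C *m (e1 R N)^T)
  (S : symseq) (n : nat) (hn : (0 < n)%N) (hper : periodic S n)
  (hS0 : \det (1%:M - MS AL AR (flip0 S n) n) != 0)
  (hMS : \det (1%:M - MS AL AR S n) = 0)
  (hPS : \det (PS AL AR S n) = 0)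
  (hmu : mu != 0)
  (hrho : ((e1 R N)^T *m \adj (1%:M - AL)) *m B != 0) :
  forall i : int, \det (PS AL AR (shiftseq S i) n) = 0.
Proof.
have /det0P [y yn0 hy] : \det (PS AL AR S n) == 0 by rewrite hPS.
have hyS := left_null_PS_MS hAR hn hS0 hMS hy.
move=> i; rewrite (shiftseq_modz i hper).
have /gez0_abs <- : (0 <= (i %% n%:Z)%Z) by rewrite modz_ge0 // -lt0n.
have [w wn0 [_ hw]] := common_left_null_shiftseq hn hper yn0 hyS `|(i %% n%:Z)%Z|%N.
by apply/eqP/det0P; exists w.
Qed.
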